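(* Let $q$ be a prime power, $5\le n\le q$, $\alpha_1,\dots,\alpha_n\in\mathbb{F}_q$ distinct, $u_1,\dots,u_n\in\mathbb{F}_q^*$, and $H\in\mathbb{F}_q^{4\times n}$ with $H_{ab}=u_b\alpha_b^{a-1}$ (so $\ker H$ has distance $5$). Then the number of $e\in\mathbb{F}_q^n$ with $|e|=3$ for which there exists $e'\in\mathbb{F}_q^n$ with $|e'|\le 2$ and $He'=He$ is at most $$\frac{(n-3)(n-4)}{2(q-1)^2}\cdot(q-1)^3\binom{n}{3}.$$
   Context: $|e|$ denotes the Hamming weight of $e\in\mathbb{F}_q^n$. *)

From HB Require Import structures.
From mathcomp Require Import all_boot all_order all_algebra all_field.
Set Implicit Arguments. Unset Strict Implicit. Unset Printing Implicit Defensive.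
Import GRing.Theory Num.Theory.
Local Open Scope ring_scope.

Definition hwt (F : finFieldType) (n : nat) (e : 'rV[F]_n) : nat :=
  #|[set i : 'I_n | e 0 i != 0]|.

(* The 4 x n matrix H with H_{ab} = u_b * alpha_b^(a-1) (rows indexed 0..3) *)
Definition Hmat (F : finFieldType) (n : nat) (alpha u : 'I_n -> F) : 'M[F]_(4, n) :=
  \matrix_(a < 4, b < n) (u b * alpha b ^+ a).

Definition bad_set (F : finFieldType) (n : nat) (alpha u : 'I_n -> F) : {set 'rV[F]_n} :=
  [set e : 'rV[F]_n | (hwt e == 3)%N &&
     [exists e' : 'rV[F]_n, (hwt e' <= 2)%N &&
        (Hmat alpha u *m e'^T == Hmat alpha u *m e^T)]].

From HB Require Import structures.
From mathcomp Require Import all_boot all_order all_algebra all_field.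
From mathcomp Require Import ring zify.
Set Implicit Arguments. Unset Strict Implicit. Unset Printing Implicit Defensive.
Import Order.TTheory GRing.Theory Num.Theory.
Local Open Scope ring_scope.

(* A kernel vector of the r x n generalized Vandermonde matrix supported on at
   most r positions is zero: pairing it against the polynomial vanishing on all
   but one of its support points isolates a single nonzero term.  With r = 4,
   a bad weight-3 vector e and a weight-<=2 vector e' with the same syndrome
   differ by a codeword of weight 5, so their supports are disjoint and e' has
   weight exactly 2; and two such codewords with the same support that agree
   at one point coincide.  Hence e is determined by its support, the support of
   e', and one of its nonzero entries, which gives at most
   C(n,3) C(n-3,2) (q-1) bad vectors, exactly the claimed bound. *)

Lemma card_disjoint_pairs (T : finType) (k l : nat) :
  #|[set p : {set T} * {set T} | [&& #|p.1| == k, p.2 \subset ~: p.1 & #|p.2| == l]]|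
  = ('C(#|T|, k) * 'C(#|T| - k, l))%N.
Proof.
rewrite -sum1_card; under eq_bigl => p do rewrite inE.
rewrite -(pair_big_dep (fun A : {set T} => #|A| == k)
                       (fun A (B : {set T}) => (B \subset ~: A) && (#|B| == l)) (fun _ _ => 1%N)) /=.
transitivity (\sum_(A : {set T} | #|A| == k) 'C(#|T| - k, l))%N.
  apply: eq_bigr => A /eqP cardA.
  have cardCA : #|~: A| = (#|T| - k)%N by rewrite [LHS]cardsCs setCK cardA.
  rewrite sum1_card -cardCA -cards_draws.
  by apply: eq_card => B; rewrite inE.
rewrite sum_nat_const -card_draws; congr (_ * _)%N.
by apply: eq_card => A; rewrite inE.
Qed.

Lemma pick_in_gt0 (T : finType) (A : {set T}) :
  (0 < #|A|)%N -> exists2 x, [pick x in A] = Some x & x \in A.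
Proof.
case/card_gt0P=> y yA; case: pickP => [x xA | none]; first by exists x.
by rewrite none in yA.
Qed.

Section GeneralizedVandermonde.
Variables (F : fieldType) (n : nat) (alpha u : 'I_n -> F).
Hypotheses (alpha_inj : injective alpha) (u_neq0 : forall i, u i != 0).

Definition supp (v : 'rV[F]_n) : {set 'I_n} := [set i | v 0 i != 0].

Lemma supp_sub (v w : 'rV[F]_n) : supp (v - w) \subset supp v :|: supp w.
Proof.
apply/subsetP => i; rewrite !inE !mxE; apply: contraR.
by rewrite negb_or !negbK => /andP[/eqP -> /eqP ->]; rewrite subrr.
Qed.

Definition gvander (r : nat) : 'M[F]_(r, n) := \matrix_(a < r, b < n) (u b * alpha b ^+ a).

Lemma gvander_ker_horner (r : nat) (c : 'rV[F]_n) (P : {poly F}) :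
  gvander r *m c^T = 0 -> (size P <= r)%N ->
  \sum_j u j * c 0 j * P.[alpha j] = 0.
Proof.
move=> ker_c sizeP.
have -> : \sum_j u j * c 0 j * P.[alpha j] = \sum_(a < r) P`_a * (gvander r *m c^T) a 0.
  under [RHS]eq_bigr => a _ do rewrite mxE mulr_sumr.
  rewrite exchange_big /=; apply: eq_bigr => j _.
  rewrite (horner_coef_wide _ sizeP) mulr_sumr; apply: eq_bigr => a _.
  by rewrite !mxE; ring.
by rewrite ker_c big1 // => a _; rewrite mxE mulr0.
Qed.

Lemma gvander_ker_eq0 (r : nat) (c : 'rV[F]_n) :
  gvander r *m c^T = 0 -> (#|supp c| <= r)%N -> c = 0.
Proof.
move=> ker_c small_c; apply/rowP => j0; rewrite mxE; apply/eqP; apply: contraT => cj0.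
have j0_supp : j0 \in supp c by rewrite inE.
pose P := \prod_(j <- enum (supp c :\ j0)) ('X - (alpha j)%:P).
have sizeP : (size P <= r)%N.
  by rewrite size_prod_XsubC -cardE; move: small_c; rewrite (cardsD1 j0) j0_supp.
have P_root j : j \in supp c :\ j0 -> P.[alpha j] = 0.
  move=> jS; rewrite /P horner_prod (big_rem j) ?mem_enum //=.
  by rewrite hornerXsubC subrr mul0r.
have P_j0 : P.[alpha j0] != 0.
  rewrite horner_prod prodf_seq_neq0; apply/allP => j.
  rewrite mem_enum !inE => /andP[j_neq _] /=.
  by rewrite hornerXsubC subr_eq0 (inj_eq alpha_inj) eq_sym.
have := gvander_ker_horner ker_c sizeP; rewrite (bigD1 j0) //= big1 ?addr0.
  by move/eqP; rewrite !mulf_eq0 (negbTE (u_neq0 j0)) (negbTE cj0) (negbTE P_j0).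
move=> j j_neq; have [cj | cj] := eqVneq (c 0 j) 0; first by rewrite cj mulr0 mul0r.
by rewrite P_root ?mulr0 // !inE j_neq.
Qed.

Lemma gvander_ker_supp_gt (r : nat) (c : 'rV[F]_n) :
  gvander r *m c^T = 0 -> c != 0 -> (r < #|supp c|)%N.
Proof. by move=> ker_c; rewrite ltnNge; apply: contra => /(gvander_ker_eq0 ker_c)->. Qed.

Lemma gvander_ker_eq (r : nat) (S : {set 'I_n}) (t : 'I_n) (c1 c2 : 'rV[F]_n) :
  gvander r *m c1^T = 0 -> gvander r *m c2^T = 0 ->
  supp c1 \subset S -> supp c2 \subset S -> (#|S| <= r.+1)%N ->
  t \in S -> c1 0 t = c2 0 t -> c1 = c2.
Proof.
move=> ker1 ker2 supp1 supp2 cardS tS c12t; apply/eqP; rewrite -subr_eq0; apply/eqP.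
apply: (gvander_ker_eq0 (r := r)); first by rewrite raddfB mulmxBr ker1 ker2 subrr.
have supp_sub_S : supp (c1 - c2) \subset S :\ t.
  apply/subsetP => i i_supp; rewrite !inE.
  apply/andP; split; first by apply: contraTneq i_supp => ->; rewrite inE !mxE c12t subrr eqxx.
  have supp12 : supp c1 :|: supp c2 \subset S by rewrite subUset supp1 supp2.
  exact: subsetP (subset_trans (supp_sub c1 c2) supp12) i i_supp.
apply: leq_trans (subset_leq_card supp_sub_S) _.
by move: cardS; rewrite (cardsD1 t S) tS.
Qed.

End GeneralizedVandermonde.

Section BadSet.
Variables (F : finFieldType) (n : nat) (alpha u : 'I_n -> F).
Hypotheses (alpha_inj : injective alpha) (u_neq0 : forall i, u i != 0).

(* Hmat alpha u is convertible to gvander alpha u 4. *)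
Local Notation H := (Hmat alpha u).

Definition mate (e : 'rV[F]_n) : 'rV[F]_n :=
  odflt 0 [pick e' | (hwt e' <= 2)%N && (H *m e'^T == H *m e^T)].

Lemma bad_set_mate (e : 'rV[F]_n) : e \in bad_set alpha u ->
  [/\ #|supp e| = 3, #|supp (mate e)| = 2, [disjoint supp e & supp (mate e)]
    & H *m (e - mate e)^T = 0].
Proof.
rewrite inE => /andP[/eqP wt_e /existsP[e0 mate_e0]].
rewrite /mate; case: pickP => [e' /andP[wt_e' /eqP same_syn] /= | /(_ e0)]; last by rewrite mate_e0.
have ker_d : H *m (e - e')^T = 0 by rewrite raddfB mulmxBr same_syn subrr.
have d_neq0 : e - e' != 0 by apply: contraTneq wt_e' => /subr0_eq <-; rewrite -ltnNge wt_e.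
have := leq_trans (gvander_ker_supp_gt alpha_inj u_neq0 ker_d d_neq0) (subset_leq_card (supp_sub e e')).
rewrite cardsU -/(hwt e) -/(hwt e') wt_e => supp_ge5.
have wt_e'2 : hwt e' = 2 by lia.
by split=> //; rewrite -setI_eq0 -cards_eq0; apply/eqP; lia.
Qed.

Lemma bad_set_coef (e : 'rV[F]_n) (i : 'I_n) : e \in bad_set alpha u ->
  e 0 i = if i \in supp e then (e - mate e) 0 i else 0.
Proof.
case/bad_set_mate=> _ _ disj _; rewrite !mxE.
case: ifPn => [i_supp | ]; last by rewrite inE negbK => /eqP.
have : i \notin supp (mate e) by rewrite (disjointFr disj i_supp).
by rewrite inE negbK => /eqP ->; rewrite subr0.
Qed.

Definition bad_code (e : 'rV[F]_n) : {set 'I_n} * {set 'I_n} * F :=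
  (supp e, supp (mate e), oapp (fun i => e 0 i) 0 [pick i in supp e]).

Lemma bad_code_inj : {in bad_set alpha u &, injective bad_code}.
Proof.
move=> e1 e2 bad1 bad2 [supp12 mate12].
have [card1 cardm1 _ ker1] := bad_set_mate bad1.
have [_ _ _ ker2] := bad_set_mate bad2.
have [t pick_t t_supp] : exists2 t, [pick i in supp e1] = Some t & t \in supp e1.
  by apply: pick_in_gt0; rewrite card1.
rewrite -supp12 pick_t /= => e12t.
have c12 : e1 - mate e1 = e2 - mate e2.
  apply: (gvander_ker_eq alpha_inj u_neq0 (r := 4) (t := t) ker1 ker2 (supp_sub _ _)).
  - by rewrite supp12 mate12 supp_sub.
  - by rewrite cardsU card1 cardm1 leq_subr.
  - by rewrite inE t_supp.
  - move: (bad_set_coef t bad1) (bad_set_coef t bad2); rewrite -supp12 t_supp => <- <-; exact: e12t.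
by apply/rowP => i; rewrite (bad_set_coef i bad1) (bad_set_coef i bad2) supp12 c12.
Qed.

Lemma card_bad_set :
  (#|bad_set alpha u| <= 'C(n, 3) * 'C(n - 3, 2) * (#|F| - 1))%N.
Proof.
set pairs := [set p : {set 'I_n} * {set 'I_n} |
               [&& #|p.1| == 3, p.2 \subset ~: p.1 & #|p.2| == 2]].
have code_sub : bad_code @: bad_set alpha u \subset setX pairs [set~ 0].
  apply/subsetP => _ /imsetP[e bad_e ->].
  have [card_e card_m disj _] := bad_set_mate bad_e.
  rewrite !inE /= card_e card_m -disjoints_subset disjoint_sym disj /=.
  have [i -> /=] : exists2 i, [pick i in supp e] = Some i & i \in supp e.
    by apply: pick_in_gt0; rewrite card_e.
  by rewrite inE.
rewrite -(card_in_imset bad_code_inj); apply: leq_trans (subset_leq_card code_sub) _.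
by rewrite cardsX card_disjoint_pairs cardsC1 card_ord subn1.
Qed.

End BadSet.

Theorem mainTheorem10 (F : finFieldType) (n : nat) (alpha u : 'I_n -> F) :
  (5 <= n)%N -> (n <= #|F|)%N ->
  injective alpha -> (forall i, u i != 0) ->
  (#|bad_set alpha u|%:R : rat) <=
    (((n - 3) * (n - 4))%N%:R / (2 * (#|F| - 1) ^ 2)%N%:R)
    * (((#|F| - 1) ^ 3) * 'C(n, 3))%N%:R.
Proof.
move=> n_ge5 n_le_q alpha_inj u_neq0.
have q1_neq0 : ((#|F| - 1)%N%:R : rat) != 0 by rewrite pnatr_eq0; lia.
have bin2E : ((n - 3) * (n - 4) = 'C(n - 3, 2) * 2)%N.
  by rewrite -[RHS]/('C(n - 3, 2) * 2`!)%N bin_ffact ffactnS ffactn1; congr (_ * _)%N; lia.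
apply: le_trans (_ : _ <= ('C(n, 3) * 'C(n - 3, 2) * (#|F| - 1))%N%:R) _.
  by rewrite ler_nat card_bad_set.
by rewrite bin2E !natrM le_eqVlt; apply/orP; left; apply/eqP; field.
Qed.
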